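(* Let $n,r,s,t\in\mathbb N$, let $G_{n,r,s,t}=(V,E,c)$ be the graph described in the context, and let $F\subseteq E$ be functional. Then: (i) Let $i\in[n]$ and $j\in[rs]$. If $b^1_{i,j}\notin F$, $b^1_{i,j'}\in F$ for all $j'>j$, $i\ge reset(F)$, and $B$ is a tree with $B\subseteq\mathcal B_F$, then $b^1_{i,j}$ is an improving switch with respect to $B$. (ii) Let $i\in[n]$, $j\in[r]$, $k\in[s]$. If $a^1_{i,j,k}\notin F$, $a^1_{i,j,k'}\in F$ for all $k'>k$, $i\ge reset(F)$, ${\bf b}^1_i\subseteq F$, and $B$ is a tree with $B\subseteq\mathcal B_F$, then $a^1_{i,j,k}$ is an improving switch with respect to $B$.
   Context: A tree is a set $B\subseteq E$ containing exactly one outgoing edge from every vertex other than the target $\mathsf t$; $y_B(v)$ is the cost of the path from $v$ to $\mathsf t$ in $B$; an edge $(u,v)$ is an improving switch with respect to $B$ if $c(u,v)+y_B(v)<y_B(u)$. The graph $G_{n,r,s,t}$. Let $[m]=\{1,\dots,m\}$ and $\epsilon=1/(rs)$. Vertices: a target $\mathsf t$ (also denoted $u_{n+1}$ and $w_{n+1}$), $u_i,w_i$ for $i\in[n]$, $a_{i,j,k}$ for $i\in[n],j\in[r],k\in[s]$, and $b_{i,j}$ for $i\in[n],j\in[rs]$. Edges (for all $i\in[n]$; ''$t$ copies'' means $t$ parallel edges indexed by $\ell\in[t]$): - $a^1_{i,j,k}:a_{i,j,k}\to a_{i,j,k+1}$, cost $0$ ($j\in[r],k\in[s-1]$); $a^1_{i,j,s}:a_{i,j,s}\to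 b_{i,1}$, cost $0$; - $a^{0,\ell}_{i,j,k}:a_{i,j,k}\to u_{i+1}$, cost $2^{2i+1}+(k-1)\epsilon$, $t$ copies ($j\in[r],k\in[s]$); - $b^1_{i,j}:b_{i,j}\to b_{i,j+1}$, cost $0$ ($j\in[rs-1]$); $b^1_{i,rs}:b_{i,rs}\to w_{i+1}$, cost $0$; - $b^{0,\ell}_{i,j}:b_{i,j}\to u_{i+1}$, cost $2^{2i+1}+1+(j-1)\epsilon$, $t$ copies ($j\in[rs]$); - $u^{1,\ell}_i:u_i\to b_{i,1}$, cost $0$, $t$ copies; $u^{0,\ell}_i:u_i\to u_{i+1}$, cost $2^{2i}$, $t$ copies; - $w^{j,\ell}_i:w_i\to a_{i,j,1}$, cost $0$, $t$ copies for each $j\in[r]$; $w^{0,\ell}_i:w_i\to w_{i+1}$, cost $2^{2i}$, $t$ copies. Edge groups: ${\bf a}^1_{i,j}=\{a^1_{i,j,k}:k\in[s]\}$, ${\bf a}^0_{i,j,k}=\{a^{0,\ell}_{i,j,k}:\ell\in[t]\}$, ${\bf b}^1_i=\{b^1_{i,j}:j\in[rs]\}$, ${\bf b}^0_{i,j}=\{b^{0,\ell}_{i,j}:\ell\in[t]\}$, ${\bf u}^1_i=\{u^{1,\ell}_i\}_\ell$, ${\bf u}^0_i=\{u^{0,\ell}_i\}_\ell$, ${\bf w}^j_i=\{w^{j,\ell}_i\}_\ell$ ($j\in[r]$), ${\bf w}^0_i=\{w^{0,\ell}_i\}_\ell$. The multi-edges are the sets ${\bf u}^1_i,{\bf u}^0_i,{\bf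 w}^0_i,{\bf b}^0_{i,j},{\bf a}^0_{i,j,k},{\bf w}^j_i$. A set $F\subseteq E$ is functional if it intersects every multi-edge. Write ${\bf a}^1_i\sqsubseteq F$ if ${\bf a}^1_{i,j}\subseteq F$ for some $j\in[r]$. Define $last({\bf b}^1_i,F)=\max(\{0\}\cup\{j\in[rs]:b^1_{i,j}\notin F\})$, $last({\bf a}^1_{i,j},F)=\max(\{0\}\cup\{k\in[s]:a^1_{i,j,k}\notin F\})$, and $reset(F)=\max(\{0\}\cup\{i\in[n]:{\bf b}^1_i\subseteq F\text{ and not }{\bf a}^1_i\sqsubseteq F\})$. For functional $F$, $\mathcal B_F\subseteq F$ consists exactly of the following edges: (i) for each $i>reset(F)$ with ${\bf b}^1_i\subseteq F$: all $b^1_{i,j}$ ($j\in[rs]$); for $j\in[r],k\in[s]$: $a^1_{i,j,k}$ if $k>last({\bf a}^1_{i,j},F)$, and ${\bf a}^0_{i,j,k}\cap F$ otherwise; ${\bf u}^1_i\cap F$; ${\bf w}^j_i\cap F$ for every $j$ with ${\bf a}^1_{i,j}\subseteq F$. (ii) for each $i>reset(F)$ with ${\bf b}^1_i\not\subseteq F$: for $j\in[rs]$: $b^1_{i,j}$ if $j>last({\bf b}^1_i,F)$, and ${\bf b}^0_{i,j}\cap F$ otherwise; ${\bf a}^0_{i,j,k}\cap F$ for all $j,k$; ${\bf u}^0_i\cap F$; ${\bf w}^0_i\cap F$. (iii) for $i=reset(F)$ (if $\ge1$): all $b^1_{i,j}$; for $j\in[r],k\in[s]$: $a^1_{i,j,k}$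 if $k>last({\bf a}^1_{i,j},F)$, and ${\bf a}^0_{i,j,k}\cap F$ otherwise; ${\bf u}^1_i\cap F$; ${\bf w}^0_i\cap F$. (iv) for each $i<reset(F)$: ${\bf b}^0_{i,j}\cap F$ for all $j\in[rs]$; ${\bf a}^0_{i,j,k}\cap F$ for all $j,k$; ${\bf u}^0_i\cap F$; ${\bf w}^j_i\cap F$ for all $j\in[r]$. *)

From HB Require Import structures.
From mathcomp Require Import all_boot all_order all_algebra.
Set Implicit Arguments. Unset Strict Implicit. Unset Printing Implicit Defensive.
Import Order.TTheory GRing.Theory Num.Theory.

(* Vertices: t, u_i, w_i, a_{i,j,k}, b_{i,j} (indices are 1-based naturals). *)
Inductive vertex : Type :=
| VT
| VU (i : nat)
| VW (i : nat)
| VA (i j k : nat)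
| VB (i j : nat).

(* Edges (ℓ = copy index of parallel edges).
   EA1 i j k   = a^1_{i,j,k}        EA0 i j k l = a^{0,l}_{i,j,k}
   EB1 i j     = b^1_{i,j}          EB0 i j l   = b^{0,l}_{i,j}
   EU1 i l     = u^{1,l}_i          EU0 i l     = u^{0,l}_i
   EW  i j l   = w^{j,l}_i (j in [r])   EW0 i l = w^{0,l}_i *)
Inductive edge : Type :=
| EA1 (i j k : nat)
| EA0 (i j k l : nat)
| EB1 (i j : nat)
| EB0 (i j l : nat)
| EU1 (i l : nat)
| EU0 (i l : nat)
| EW (i j l : nat)
| EW0 (i l : nat).

Section Graph.
Variables n r s t : nat.

Definition inr1 (m x : nat) : bool := (1 <= x <= m)%N.

Definition validV (v : vertex) : bool :=
  match v with
  | VT => true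
  | VU i | VW i => inr1 n i
  | VA i j k => [&& inr1 n i, inr1 r j & inr1 s k]
  | VB i j => inr1 n i && inr1 (r * s) j
  end.

Definition validE (e : edge) : bool :=
  match e with
  | EA1 i j k => [&& inr1 n i, inr1 r j & inr1 s k]
  | EA0 i j k l => [&& inr1 n i, inr1 r j, inr1 s k & inr1 t l]
  | EB1 i j => inr1 n i && inr1 (r * s) j
  | EB0 i j l => [&& inr1 n i, inr1 (r * s) j & inr1 t l]
  | EU1 i l | EU0 i l | EW0 i l => inr1 n i && inr1 t l
  | EW i j l => [&& inr1 n i, inr1 r j & inr1 t l]
  end.

Definition uN (i : nat) : vertex := if i == n.+1 then VT else VU i.
Definition wN (i : nat) : vertex := if i == n.+1 then VT else VW i.

Definition src (e : edge) : vertex :=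
  match e with
  | EA1 i j k | EA0 i j k _ => VA i j k
  | EB1 i j | EB0 i j _ => VB i j
  | EU1 i _ | EU0 i _ => VU i
  | EW i _ _ | EW0 i _ => VW i
  end.

Definition tgt (e : edge) : vertex :=
  match e with
  | EA1 i j k => if (k < s)%N then VA i j k.+1 else VB i 1
  | EA0 i _ _ _ => uN i.+1
  | EB1 i j => if (j < r * s)%N then VB i j.+1 else wN i.+1
  | EB0 i _ _ => uN i.+1
  | EU1 i _ => VB i 1
  | EU0 i _ => uN i.+1
  | EW i j _ => VA i j 1
  | EW0 i _ => wN i.+1
  end.

Local Open Scope ring_scope.

Definition eps : rat := 1 / (r * s)%:R.

Definition cost (e : edge) : rat :=
  match e with
  | EA1 _ _ _ => 0
  | EA0 i _ k _ => (2 ^ (2 * i + 1))%:R + (k - 1)%:R * eps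
  | EB1 _ _ => 0
  | EB0 i j _ => (2 ^ (2 * i + 1))%:R + 1 + (j - 1)%:R * eps
  | EU1 _ _ => 0
  | EU0 i _ => (2 ^ (2 * i))%:R
  | EW _ _ _ => 0
  | EW0 i _ => (2 ^ (2 * i))%:R
  end.

Definition is_tree (B : pred edge) : Prop :=
  (forall e, B e -> validE e) /\
  (forall v, validV v -> v <> VT -> exists! e, B e /\ src e = v).

Inductive pathcost (B : pred edge) : vertex -> rat -> Prop :=
| pc_t : pathcost B VT 0
| pc_step (e : edge) (y : rat) :
    B e -> src e <> VT -> pathcost B (tgt e) y -> pathcost B (src e) (cost e + y).

Definition improving (B : pred edge) (e : edge) : Prop :=
  exists yu yv, [/\ pathcost B (src e) yu, pathcost B (tgt e) yv & cost e + yv < yu].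

Local Close Scope ring_scope.

(* F is functional: F ⊆ E and F intersects every multi-edge. *)
Definition functional (F : pred edge) : Prop :=
  (forall e, F e -> validE e) /\
  (forall i, inr1 n i ->
     (exists l, inr1 t l /\ F (EU1 i l)) /\
     (exists l, inr1 t l /\ F (EU0 i l)) /\
     (exists l, inr1 t l /\ F (EW0 i l)) /\
     (forall j, inr1 (r * s) j -> exists l, inr1 t l /\ F (EB0 i j l)) /\
     (forall j k, inr1 r j -> inr1 s k -> exists l, inr1 t l /\ F (EA0 i j k l)) /\
     (forall j, inr1 r j -> exists l, inr1 t l /\ F (EW i j l))).

Variable F : pred edge.

Definition b1sub (i : nat) : bool := [forall j : 'I_(r * s), F (EB1 i j.+1)].
Definition a1sub (i j : nat) : bool := [forall k : 'I_s, F (EA1 i j k.+1)].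
Definition a1sq (i : nat) : bool := [exists j : 'I_r, a1sub i j.+1].

Definition lastB (i : nat) : nat :=
  \max_(j < (r * s).+1 | (0 < j)%N && ~~ F (EB1 i j)) j.
Definition lastA (i j : nat) : nat :=
  \max_(k < s.+1 | (0 < k)%N && ~~ F (EA1 i j k)) k.
Definition reset : nat :=
  \max_(i < n.+1 | [&& (0 < i)%N, b1sub i & ~~ a1sq i]) i.

Definition inBF (e : edge) : bool :=
  let R := reset in
  let cls i (c1 c2 c3 c4 : bool) :=
      if (R < i)%N then (if b1sub i then c1 else c2)
      else if i == R then c3 else c4 in
  F e &&
  match e with
  | EB1 i j => cls i true (lastB i < j)%N true false
  | EB0 i j _ => cls i false (j <= lastB i)%N false true
  | EA1 i j k => cls i (lastA i j < k)%N false (lastA i j < k)%N false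
  | EA0 i j k _ => cls i (k <= lastA i j)%N true (k <= lastA i j)%N true
  | EU1 i _ => cls i true false true false
  | EU0 i _ => cls i false true false true
  | EW i j _ => cls i (a1sub i j) false false true
  | EW0 i _ => cls i false true true false
  end.

End Graph.

(* Above the reset level, B_F gives u_m and w_m the same distance
   to the target: if b^1_m is contained in F, both enter the 0-cost chain
   b_{m,1} -> ... -> b_{m,rs} -> w_{m+1} (w_m through an a^1_{m,j}-chain that
   lies entirely in F), and otherwise both pay 2^{2m}, to u_{m+1} and w_{m+1}
   respectively.  By descending induction y_B(u_m) = y_B(w_m) for every
   m > reset(F).  Beyond the last missing b^1_{i,j} (resp. a^1_{i,j,k}) B_F
   keeps only the 1-edges, so the head of the switch reaches w_{i+1} at cost 0,
   while B leaves its tail through a 0-edge of positive cost into u_{i+1}. *)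
From mathcomp Require Import all_boot all_order all_algebra.
From mathcomp Require Import zify lra.
Import GRing.Theory Num.Theory.

Set Implicit Arguments.
Unset Strict Implicit.

Lemma nat_down_ind (P : nat -> Prop) (lo hi : nat) :
  P hi -> (forall m, (lo <= m < hi)%N -> P m.+1 -> P m) ->
  forall m, (lo <= m <= hi)%N -> P m.
Proof.
move=> Phi IH m /andP[lo_m m_hi]; move Ed: (hi - m)%N => d.
elim: d m lo_m m_hi Ed => [|d IHd] m lo_m m_hi Ed; first by have -> : m = hi by lia.
by apply: IH; [lia | apply: IHd; lia].
Qed.

Section BFEdges.

Variables (n r s : nat) (F : pred edge).

Lemma eps_ge0 : (0 <= eps r s)%R.
Proof. by rewrite /eps divr_ge0 ?ler0n. Qed.

Lemma cost_EB0_gt0 i j l : (0 < cost r s (EB0 i j l))%R.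
Proof.
have := eps_ge0; have : (0 <= (2 ^ (2 * i + 1))%:R :> rat)%R by rewrite ler0n.
have : (0 <= (j - 1)%:R :> rat)%R by rewrite ler0n.
rewrite /=; nra.
Qed.

Lemma cost_EA0_gt0 i j k l : (0 < cost r s (EA0 i j k l))%R.
Proof.
have := eps_ge0; have : (0 < (2 ^ (2 * i + 1))%:R :> rat)%R by rewrite ltr0n expn_gt0.
have : (0 <= (k - 1)%:R :> rat)%R by rewrite ler0n.
rewrite /=; nra.
Qed.

Lemma b1sub_EB1 i j : b1sub r s F i -> (0 < j <= r * s)%N -> F (EB1 i j).
Proof.
move=> /forallP b1 /andP[j_gt0 j_le]; have jo : (j.-1 < r * s)%N by lia.
by have := b1 (Ordinal jo); rewrite /= prednK.
Qed.

Lemma a1sub_EA1 i j k : a1sub s F i j -> (0 < k <= s)%N -> F (EA1 i j k).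
Proof.
move=> /forallP a1 /andP[k_gt0 k_le]; have ko : (k.-1 < s)%N by lia.
by have := a1 (Ordinal ko); rewrite /= prednK.
Qed.

Lemma reset_b1sub : (0 < reset n r s F)%N -> b1sub r s F (reset n r s F).
Proof.
rewrite /reset; elim/big_ind: _ => // [x y bx by_ | i /and3P[_ b _] _] //.
by rewrite /maxn; case: ifP.
Qed.

Lemma lastB_le i j0 :
  (forall j, (j0 < j <= r * s)%N -> F (EB1 i j)) -> (lastB r s F i <= j0)%N.
Proof.
move=> Fafter; apply/bigmax_leqP => j /andP[_ nF]; rewrite leqNgt.
by apply: contra nF => j0_lt; apply: Fafter; rewrite j0_lt -ltnS ltn_ord.
Qed.

Lemma lastA_le i j k0 :
  (forall k, (k0 < k <= s)%N -> F (EA1 i j k)) -> (lastA s F i j <= k0)%N.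
Proof.
move=> Fafter; apply/bigmax_leqP => k /andP[_ nF]; rewrite leqNgt.
by apply: contra nF => k0_lt; apply: Fafter; rewrite k0_lt -ltnS ltn_ord.
Qed.

Lemma inBF_EB0_b1sub i j l :
  (reset n r s F <= i)%N -> b1sub r s F i -> ~~ inBF n r s F (EB0 i j l).
Proof.
rewrite leq_eqVlt => /orP[/eqP <- _ | lt_i b1]; rewrite /inBF /=.
  by rewrite ltnn eqxx andbF.
by rewrite lt_i b1 andbF.
Qed.

Lemma inBF_EA0_lastA i j k l :
  (reset n r s F <= i)%N -> b1sub r s F i -> inBF n r s F (EA0 i j k l) ->
  (k <= lastA s F i j)%N.
Proof.
rewrite leq_eqVlt => /orP[/eqP <- _ | lt_i b1]; rewrite /inBF /=.
  by rewrite ltnn eqxx => /andP[].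
by rewrite lt_i b1 => /andP[].
Qed.

Lemma inBF_EB0_lastB i j l :
  (reset n r s F < i)%N -> ~~ b1sub r s F i -> inBF n r s F (EB0 i j l) ->
  (j <= lastB r s F i)%N.
Proof. by move=> lt_i nb1; rewrite /inBF /= lt_i (negbTE nb1) => /andP[]. Qed.

End BFEdges.

Section TreeInBF.

Variables (n r s t : nat) (F B : pred edge).
Hypothesis B_tree : is_tree n r s t B.
Hypothesis B_sub_BF : forall e, B e -> inBF n r s F e.

Lemma src_neq_VT {e : edge} : src e <> VT.
Proof. by case: e. Qed.

Lemma pathcost_zero_step (e : edge) (y : rat) :
  B e -> cost r s e = 0%R -> pathcost n r s B (tgt n r s e) y ->
  pathcost n r s B (src e) y.
Proof.
move=> Be ce pc; have := pc_step Be src_neq_VT pc.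
by rewrite ce add0r.
Qed.

Lemma tree_out_edge (v : vertex) :
  validV n r s v -> v <> VT -> exists e, B e /\ src e = v.
Proof. by move=> vv vT; case: B_tree => _ /(_ v vv vT) [e [[Be se] _]]; exists e. Qed.

Lemma tree_out_VB i j :
  validV n r s (VB i j) -> B (EB1 i j) \/ exists l, B (EB0 i j l).
Proof.
move=> vB; have [e [Be se]] : exists e, B e /\ src e = VB i j by apply: tree_out_edge.
by case: e Be se => //= [i' j' | i' j' l] Be [<- <-]; [left | right; exists l].
Qed.

Lemma tree_out_VA i j k :
  validV n r s (VA i j k) -> B (EA1 i j k) \/ exists l, B (EA0 i j k l).
Proof.
move=> vA; have [e [Be se]] : exists e, B e /\ src e = VA i j k by apply: tree_out_edge.
by case: e Be se => //= [i' j' k' | i' j' k' l] Be [<- <- <-]; [left | right; exists l].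
Qed.

Lemma tree_out_VU i :
  inr1 n i -> (exists l, B (EU1 i l)) \/ exists l, B (EU0 i l).
Proof.
move=> i_n; have [e [Be se]] : exists e, B e /\ src e = VU i by apply: tree_out_edge.
by case: e Be se => //= [i' l | i' l] Be [<-]; [left | right]; exists l.
Qed.

Lemma tree_out_VW i :
  inr1 n i -> (exists j l, inr1 r j /\ B (EW i j l)) \/ exists l, B (EW0 i l).
Proof.
move=> i_n; have [e [Be se]] : exists e, B e /\ src e = VW i by apply: tree_out_edge.
case: e Be se => //= [i' j l | i' l] Be [<-]; last by right; exists l.
have /and3P[_ j_r _] := proj1 B_tree _ Be.
by left; exists j, l.
Qed.

Lemma improving_of_tree_edge (e e0 : edge) (y : rat) :
  B e0 -> pathcost n r s B (tgt n r s e0) y -> pathcost n r s B (tgt n r s e) y ->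
  src e0 = src e -> (cost r s e < cost r s e0)%R -> improving n r s B e.
Proof.
move=> Be0 pc0 pc se0 lt_cost; exists (cost r s e0 + y)%R, y.
rewrite -se0; split => //; first exact: pc_step src_neq_VT pc0.
by rewrite ltrD2r.
Qed.

Lemma pathcost_b1_chain i j0 y :
  inr1 n i -> pathcost n r s B (wN n i.+1) y ->
  (forall j l, (j0 < j <= r * s)%N -> ~~ B (EB0 i j l)) ->
  forall j, (j0 <= j <= r * s)%N -> pathcost n r s B (tgt n r s (EB1 i j)) y.
Proof.
move=> i_n pc_w noB0; apply: nat_down_ind => [|j /andP[j0_le j_lt] IH].
  by rewrite /= ltnn.
rewrite /= j_lt; have vB : validV n r s (VB i j.+1) by rewrite /= i_n /inr1; lia.
case: (tree_out_VB vB) => [Bb1 | [l Bb0]]; first exact: pathcost_zero_step Bb1 erefl IH.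
by move: (noB0 j.+1 l); rewrite Bb0 /=; lia.
Qed.

Lemma pathcost_a1_chain i j k0 y :
  inr1 n i -> inr1 r j -> pathcost n r s B (VB i 1) y ->
  (forall k l, (k0 < k <= s)%N -> ~~ B (EA0 i j k l)) ->
  forall k, (k0 <= k <= s)%N -> pathcost n r s B (tgt n r s (EA1 i j k)) y.
Proof.
move=> i_n j_r pc_b noA0; apply: nat_down_ind => [|k /andP[k0_le k_lt] IH].
  by rewrite /= ltnn.
rewrite /= k_lt; have vA : validV n r s (VA i j k.+1) by rewrite /= i_n j_r /inr1; lia.
case: (tree_out_VA vA) => [Ba1 | [l Ba0]]; first exact: pathcost_zero_step Ba1 erefl IH.
by move: (noA0 k.+1 l); rewrite Ba0 /=; lia.
Qed.

Definition level_balanced (m : nat) : Prop :=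
  exists y, pathcost n r s B (uN n m) y /\ pathcost n r s B (wN n m) y.

Lemma level_step_b1sub m y :
  (0 < r * s)%N -> (reset n r s F < m)%N -> inr1 n m -> b1sub r s F m ->
  pathcost n r s B (wN n m.+1) y -> level_balanced m.
Proof.
move=> rs_gt0 lt_m m_n b1 pc_w.
have noB0 j l : (0 < j <= r * s)%N -> ~~ B (EB0 m j l).
  by move=> _; apply: contraNN (inBF_EB0_b1sub j l (ltnW lt_m) b1); apply: B_sub_BF.
have := pathcost_b1_chain m_n pc_w noB0 (leq0n _); rewrite /= rs_gt0 => pc_b.
have m_neq : m != n.+1 by move: m_n; rewrite /inr1; lia.
exists y; rewrite /uN /wN (negbTE m_neq); split.
  case: (tree_out_VU m_n) => [[l Bu1] | [l Bu0]]; first exact: pathcost_zero_step Bu1 erefl pc_b.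
  by move: (B_sub_BF Bu0); rewrite /inBF /= lt_m b1 andbF.
case: (tree_out_VW m_n) => [[j [l [j_r Bw]]] | [l Bw0]]; last first.
  by move: (B_sub_BF Bw0); rewrite /inBF /= lt_m b1 andbF.
have a1 : a1sub s F m j by move: (B_sub_BF Bw); rewrite /inBF /= lt_m b1 => /andP[].
have lastA0 : lastA s F m j = 0%N.
  by apply/eqP; rewrite -leqn0; apply: lastA_le => k; apply: a1sub_EA1.
have noA0 k l' : (0 < k <= s)%N -> ~~ B (EA0 m j k l').
  move=> /andP[k_gt0 _]; apply: contraTN k_gt0 => /B_sub_BF.
  by move/(inBF_EA0_lastA (ltnW lt_m) b1); rewrite lastA0 leqn0 => /eqP ->.
have s_gt0 : (0 < s)%N by move: rs_gt0; rewrite muln_gt0 => /andP[].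
have := pathcost_a1_chain m_n j_r pc_b noA0 (leq0n _); rewrite /= s_gt0 => pc_a.
exact: pathcost_zero_step Bw erefl pc_a.
Qed.

Lemma level_step_not_b1sub m y :
  (reset n r s F < m)%N -> inr1 n m -> ~~ b1sub r s F m ->
  pathcost n r s B (uN n m.+1) y -> pathcost n r s B (wN n m.+1) y ->
  level_balanced m.
Proof.
move=> lt_m m_n nb1 pc_u pc_w.
have m_neq : m != n.+1 by move: m_n; rewrite /inr1; lia.
exists ((2 ^ (2 * m))%:R + y)%R; rewrite /uN /wN (negbTE m_neq); split.
  case: (tree_out_VU m_n) => [[l Bu1] | [l Bu0]]; last exact: pc_step Bu0 src_neq_VT pc_u.
  by move: (B_sub_BF Bu1); rewrite /inBF /= lt_m (negbTE nb1) andbF.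
case: (tree_out_VW m_n) => [[j [l [_ Bw]]] | [l Bw0]]; last exact: pc_step Bw0 src_neq_VT pc_w.
by move: (B_sub_BF Bw); rewrite /inBF /= lt_m (negbTE nb1) andbF.
Qed.

Lemma level_balanced_above_reset m :
  (0 < r * s)%N -> (reset n r s F < m <= n.+1)%N -> level_balanced m.
Proof.
move=> rs_gt0; apply: nat_down_ind => [|m' /andP[lt_m' m'_le] [y [pc_u pc_w]]].
  by exists 0%R; rewrite /uN /wN eqxx; split; constructor.
have m'_n : inr1 n m' by rewrite /inr1; lia.
have [b1 | nb1] := boolP (b1sub r s F m').
  exact: level_step_b1sub b1 pc_w.
exact: level_step_not_b1sub nb1 pc_u pc_w.
Qed.

Lemma improving_b1_last_missing i j :
  inr1 n i -> inr1 (r * s) j -> ~~ F (EB1 i j) ->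
  (forall j', (j < j' <= r * s)%N -> F (EB1 i j')) ->
  (reset n r s F <= i)%N -> improving n r s B (EB1 i j).
Proof.
move=> i_n j_rs nF Fafter le_i.
have rs_gt0 : (0 < r * s)%N by move: j_rs; rewrite /inr1; lia.
have nb1 : ~~ b1sub r s F i by apply: contra nF => b1; apply: b1sub_EB1 b1 j_rs.
have lt_i : (reset n r s F < i)%N.
  rewrite ltn_neqAle le_i andbT; apply/eqP => Ei; move: nb1.
  by rewrite -Ei reset_b1sub // Ei; case/andP: i_n.
have [y [pc_u pc_w]] : level_balanced i.+1.
  apply: (level_balanced_above_reset rs_gt0).
  by rewrite ltnS le_i; case/andP: i_n.
have noB0 j' l : (j < j' <= r * s)%N -> ~~ B (EB0 i j' l).
  move=> /andP[lt_j' _]; apply: contraTN lt_j' => /B_sub_BF /(inBF_EB0_lastB lt_i nb1) le_j'.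
  by rewrite -leqNgt (leq_trans le_j' (lastB_le Fafter)).
have pc_v : pathcost n r s B (tgt n r s (EB1 i j)) y.
  apply: (pathcost_b1_chain i_n pc_w noB0).
  by rewrite leqnn; case/andP: j_rs.
have vB : validV n r s (VB i j) by rewrite /= i_n j_rs.
have [Bb1 | [l Bb0]] := tree_out_VB vB.
  by have := B_sub_BF Bb1; rewrite /inBF (negbTE nF).
exact: improving_of_tree_edge Bb0 pc_u pc_v erefl (cost_EB0_gt0 r s i j l).
Qed.

Lemma improving_a1_last_missing i j k :
  inr1 n i -> inr1 r j -> inr1 s k -> ~~ F (EA1 i j k) ->
  (forall k', (k < k' <= s)%N -> F (EA1 i j k')) ->
  (reset n r s F <= i)%N -> b1sub r s F i -> improving n r s B (EA1 i j k).
Proof.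
move=> i_n j_r k_s nF Fafter le_i b1.
have rs_gt0 : (0 < r * s)%N by rewrite muln_gt0; move: j_r k_s; rewrite /inr1; lia.
have [y [pc_u pc_w]] : level_balanced i.+1.
  apply: (level_balanced_above_reset rs_gt0).
  by rewrite ltnS le_i; case/andP: i_n.
have noB0 j' l : (0 < j' <= r * s)%N -> ~~ B (EB0 i j' l).
  by move=> _; apply: contraNN (inBF_EB0_b1sub j' l le_i b1); apply: B_sub_BF.
have := pathcost_b1_chain i_n pc_w noB0 (leq0n _); rewrite /= rs_gt0 => pc_b.
have noA0 k' l : (k < k' <= s)%N -> ~~ B (EA0 i j k' l).
  move=> /andP[lt_k' _]; apply: contraTN lt_k' => /B_sub_BF /(inBF_EA0_lastA le_i b1) le_k'.
  by rewrite -leqNgt (leq_trans le_k' (lastA_le Fafter)).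
have pc_v : pathcost n r s B (tgt n r s (EA1 i j k)) y.
  apply: (pathcost_a1_chain i_n j_r pc_b noA0).
  by rewrite leqnn; case/andP: k_s.
have vA : validV n r s (VA i j k) by rewrite /= i_n j_r k_s.
have [Ba1 | [l Ba0]] := tree_out_VA vA.
  by have := B_sub_BF Ba1; rewrite /inBF (negbTE nF).
exact: improving_of_tree_edge Ba0 pc_u pc_v erefl (cost_EA0_gt0 r s i j k l).
Qed.

End TreeInBF.

Theorem mainTheorem6 (n r s t : nat) (F : pred edge) :
  functional n r s t F ->
  (forall (i j : nat), inr1 n i -> inr1 (r * s) j ->
     ~~ F (EB1 i j) ->
     (forall j', (j < j' <= r * s)%N -> F (EB1 i j')) ->
     (reset n r s F <= i)%N ->
     forall B : pred edge, is_tree n r s t B ->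
       (forall e, B e -> inBF n r s F e) ->
       improving n r s B (EB1 i j)) /\
  (forall (i j k : nat), inr1 n i -> inr1 r j -> inr1 s k ->
     ~~ F (EA1 i j k) ->
     (forall k', (k < k' <= s)%N -> F (EA1 i j k')) ->
     (reset n r s F <= i)%N ->
     b1sub r s F i ->
     forall B : pred edge, is_tree n r s t B ->
       (forall e, B e -> inBF n r s F e) ->
       improving n r s B (EA1 i j k)).
Proof.
move=> _; split.
- move=> i j i_n j_rs nF Fafter le_i B B_tree B_sub_BF.
  exact: (improving_b1_last_missing B_tree B_sub_BF i_n j_rs nF Fafter le_i).
- move=> i j k i_n j_r k_s nF Fafter le_i b1 B B_tree B_sub_BF.
  exact: (improving_a1_last_missing B_tree B_sub_BF i_n j_r k_s nF Fafter le_i b1).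
Qed.
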